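(* (Euler's formula for the number of spanning trees.) Let $G$ be a connected graph in which each edge $e_i$ has end points $p_i,q_i$. For any $s,t\in V(G)$, $$t(G_{st})=k\,t(G)+\frac{1}{4t(G)}\sum_{\substack{e_i\in E(G)\\ e_i\text{ not a bridge}}}\big[t(G_{p_is})-t(G_{p_it})-t(G_{q_is})+t(G_{q_it})\big]^2,$$ where $k$ is the number of bridges lying on any path connecting $s$ and $t$. Equivalently, $$t(G_{st})=\frac{1}{4t(G)}\sum_{e_i\in E(G)}\big[t(G_{p_is})-t(G_{p_it})-t(G_{q_is})+t(G_{q_it})\big]^2.$$
   Context: Graphs are finite and may have multiple edges and loops; $t(H)$ is the number of spanning trees of $H$; a graph with one vertex has $t=1$. $G_{xy}$ denotes the graph obtained from $G$ by identifying vertices $x$ and $y$, with the convention $t(G_{xx}):=0$. A bridge is an edge whose deletion disconnects $G$. *)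

From HB Require Import structures.
From mathcomp Require Import all_boot all_order all_algebra.
Set Implicit Arguments. Unset Strict Implicit. Unset Printing Implicit Defensive.
Import Order.TTheory GRing.Theory Num.Theory.

Record mgraph := MGraph {
  vert : finType;
  edge : finType;
  ep1 : edge -> vert;
  ep2 : edge -> vert }.

Section Graphs.
Variable G : mgraph.

Definition adj (F : {set edge G}) : rel (vert G) := fun u v =>
  [exists e in F, ((ep1 e == u) && (ep2 e == v)) || ((ep1 e == v) && (ep2 e == u))].

Definition spans (F : {set edge G}) : bool :=
  [forall u, forall v, connect (adj F) u v].

(* (V(G), F) is a spanning tree: connected and acyclic, where acyclicity of a
   connected (multi)graph is expressed as: every edge is a bridge of it
   (a loop or an edge lying on a cycle is never a bridge). *)
Definition is_spanning_tree (F : {set edge G}) : bool :=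
  spans F && [forall e in F, ~~ spans (F :\ e)].

Definition ntrees : nat := #|[set F : {set edge G} | is_spanning_tree F]|.

Definition connectedG : bool := spans [set: edge G].

Definition is_bridge (e : edge G) : bool := ~~ spans ([set: edge G] :\ e).

(* deleting e separates s from t (for a bridge e of a connected graph this
   means exactly that e lies on every/any s-t path) *)
Definition separates (e : edge G) (s t : vert G) : bool :=
  ~~ connect (adj ([set: edge G] :\ e)) s t.

(* G_{xy} for x != y: vertex y is identified with x. Vertex set V \ {y},
   each end point equal to y is redirected to x; edges are unchanged. *)
Definition ident (x y : vert G) (H : x != y) : mgraph :=
  let W := {v : vert G | v != y} in
  let m := fun v : vert G => insubd (exist (fun v => v != y) x H) v : W in
  @MGraph W (edge G) (fun e => m (ep1 e)) (fun e => m (ep2 e)).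

End Graphs.

(* t(G_{xy}), with the convention t(G_{xx}) := 0 *)
Definition tid (G : mgraph) (x y : vert G) : nat :=
  match (x != y) as b return (x != y) = b -> nat with
  | true => fun H => ntrees (ident H)
  | false => fun _ => 0
  end (erefl _).

From mathcomp Require Import all_boot all_order all_algebra ring.
Import GRing.Theory Num.Theory.
Set Implicit Arguments. Unset Strict Implicit. Unset Printing Implicit Defensive.

(* Spanning trees of G_{st} are the spanning forests of G with two trees, one
   containing s and the other t ("two-forests" for s, t).  For such a forest F,
   [F two-forest for v,s] - [F two-forest for v,t]
     = [F two-forest for s,t] * (1 - 2 [v on the s-side of F]),
   so the potential phi(v) = t(G_vs) - t(G_vt) satisfies
   D_e = phi(p_e) - phi(q_e) = -2 I_e, where I_e counts with sign the
   two-forests for s, t whose two sides are joined by e.  Adding e to such a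
   forest gives a spanning tree in which e lies on the s-t path, so I_e is the
   sum over all spanning trees of the unit s-t flow along the tree path: a flow
   of value t(G) from s to t (Kirchhoff's current).  Summation by parts gives
   sum_e D_e^2 = -2 sum_e I_e (phi(p_e) - phi(q_e)) = -2 t(G) (phi(s) - phi(t))
   = 4 t(G) t(G_st).  A bridge lies in every spanning tree, and separates s
   from t either in all of them or in none, so its term is
   4 t(G)^2 [e separates s and t]; this gives the first formula. *)

Lemma connect_ind (T : finType) (r : rel T) (P : T -> Prop) :
  (forall x y, P x -> r x y -> P y) -> forall x, P x -> forall y, connect r x y -> P y.
Proof.
move=> step x Px y /connectP [p pth ->].
by elim: p x Px pth => //= z p IH x Px /andP [rxz pth]; apply: IH (step _ _ Px rxz) pth.
Qed.

Notation conn F := (connect (adj F)).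

Section Connectivity.
Variable G : mgraph.
Implicit Types (F : {set edge G}) (e : edge G) (a b p q v w : vert G).

Lemma adj_sym F : symmetric (adj F).
Proof. by move=> u v; apply: eq_existsb => e; rewrite orbC. Qed.

Lemma conn_sym F : connect_sym (adj F).
Proof. exact/sym_connect_sym/adj_sym. Qed.

Lemma connC F a b : conn F a b = conn F b a.
Proof. exact: conn_sym. Qed.

Lemma adjP F a b : reflect
  (exists2 e, e \in F & ((ep1 e == a) && (ep2 e == b)) || ((ep1 e == b) && (ep2 e == a)))
  (adj F a b).
Proof. exact: (iffP exists_inP). Qed.

Lemma conn_edge F e : e \in F -> conn F (ep1 e) (ep2 e).
Proof. by move=> eF; apply/connect1/adjP; exists e; rewrite ?eqxx. Qed.

Lemma conn_subset F F' a b : F \subset F' -> conn F a b -> conn F' a b.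
Proof.
move=> /subsetP sFF'; apply: connect_sub => u v /adjP [e /sFF' eF' uv].
by apply/connect1/adjP; exists e.
Qed.

Lemma conn_setD1 F e a b : conn F a b ->
  [\/ conn (F :\ e) a b, conn (F :\ e) a (ep1 e) /\ conn (F :\ e) (ep2 e) b
    | conn (F :\ e) a (ep2 e) /\ conn (F :\ e) (ep1 e) b].
Proof.
move: b; apply: connect_ind; last by constructor 1.
move=> w w' Pw /adjP [f fF ww']; case: (eqVneq f e) ww' => [->|fe] ww'.
  by case/orP: ww' Pw => /andP [/eqP <- /eqP <-] [h|[h _]|[h _]];
    [constructor 2|constructor 2|constructor 1|constructor 3|constructor 1|constructor 3].
have {}ww' : conn (F :\ e) w w'.
  by apply/connect1/adjP; exists f; rewrite // !inE fe.
case: Pw => [h|[h1 h2]|[h1 h2]]; first by constructor 1; apply: connect_trans ww'.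
  by constructor 2; split=> //; apply: connect_trans ww'.
by constructor 3; split=> //; apply: connect_trans ww'.
Qed.

Lemma conn_setD1_cycle F e a b :
  conn (F :\ e) (ep1 e) (ep2 e) -> conn F a b -> conn (F :\ e) a b.
Proof.
move=> pq /(conn_setD1 e) [//|[ap qb]|[aq pb]].
  exact: connect_trans (connect_trans ap pq) qb.
by rewrite connC in pq; apply: connect_trans (connect_trans aq pq) pb.
Qed.

Lemma conn_through F e a b : e \in F ->
  conn (F :\ e) a (ep1 e) -> conn (F :\ e) (ep2 e) b -> conn F a b.
Proof.
move=> eF ap qb; have sub := subsetDl F [set e].
apply: connect_trans (conn_subset sub ap) _.
exact: connect_trans (conn_edge eF) (conn_subset sub qb).
Qed.

Definition incident e v := (ep1 e == v) || (ep2 e == v).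
Definition other_end e v := if ep1 e == v then ep2 e else ep1 e.

Lemma incidentP e v : incident e v ->
  (ep1 e = v /\ ep2 e = other_end e v) \/ (ep2 e = v /\ ep1 e = other_end e v).
Proof. by rewrite /incident /other_end; case: eqP => [->|_ /eqP]; [left|right]. Qed.

Lemma conn_other_end F e v : e \in F -> incident e v -> conn F v (other_end e v).
Proof.
move=> eF /incidentP [[<- <-]|[<- <-]]; last rewrite connC; exact: conn_edge.
Qed.

Lemma conn_setD1_incident F e v a b : incident e v -> conn F a b ->
  [\/ conn (F :\ e) a b, conn (F :\ e) a v /\ conn (F :\ e) (other_end e v) b
    | conn (F :\ e) a (other_end e v) /\ conn (F :\ e) v b].
Proof.
move=> /incidentP [[<- <-]|[<- <-]] /(conn_setD1 e) //.
by case=> h; [constructor 1|constructor 3|constructor 2].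
Qed.

Definition acyclic F := [forall e in F, ~~ conn (F :\ e) (ep1 e) (ep2 e)].

Lemma acyclic_incident F e v :
  acyclic F -> e \in F -> incident e v -> ~~ conn (F :\ e) v (other_end e v).
Proof.
move=> /forall_inP ac eF /incidentP [[<- <-]|[<- <-]]; last rewrite connC; exact: ac.
Qed.

Lemma spans_conn F a b : spans F -> conn F a b.
Proof. by move=> /forallP/(_ a)/forallP. Qed.

Lemma spanning_treeE F : is_spanning_tree F = spans F && acyclic F.
Proof.
rewrite /is_spanning_tree; case sF: (spans F) => //=.
apply: eq_forallb_in => e eF; congr (~~ _); apply/idP/idP.
  by move=> /forallP/(_ (ep1 e))/forallP.
by move=> pq; apply/forallP => a; apply/forallP => b; apply/conn_setD1_cycle/spans_conn.
Qed.

Lemma path_setD1_avoid F e v x r : incident e v -> v \notin x :: r ->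
  path (adj F) x r -> path (adj (F :\ e)) x r.
Proof.
move=> ev; elim: r x => //= y r IH x; rewrite !inE !negb_or => /and3P [vx vy vr].
case/andP => /adjP [f fF xy] pr; rewrite IH ?inE ?negb_or ?vy // andbT.
apply/adjP; exists f => //; rewrite !inE fF andbT; apply: contraTneq ev => <-.
rewrite /incident; case/orP: xy => /andP [/eqP -> /eqP ->];
  by rewrite ![_ == v]eq_sym (negbTE vx) (negbTE vy).
Qed.

Lemma exists_separating_edge F v a : acyclic F -> conn F v a -> v != a ->
  exists e, [/\ e \in F, incident e v, conn (F :\ e) (other_end e v) a
              & ~~ conn (F :\ e) v a].
Proof.
move=> ac /connectP [p pth ->]; case: (shortenP pth) => [[|x r]] //=; first by rewrite eqxx.
move=> /andP [/adjP [e eF vx] pr] /andP [vxr _] _ _.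
have ev : incident e v.
  by rewrite /incident; case/orP: vx => /andP [/eqP -> /eqP ->]; rewrite eqxx ?orbT.
have ox : other_end e v = x.
  rewrite /other_end; case/orP: vx => /andP [/eqP -> /eqP ->]; rewrite ?eqxx //.
  by move: vxr; rewrite inE negb_or eq_sym => /andP [/negbTE ->].
have xa : conn (F :\ e) x (last x r).
  by apply/connectP; exists r => //; apply: path_setD1_avoid vxr pr.
exists e; split; rewrite ?ox //; apply/negP => va.
move/negP: (acyclic_incident ac eF ev); rewrite ox; apply.
by rewrite (connect_trans va) // connC.
Qed.

Lemma separating_edge_unique F v a e1 e2 : acyclic F -> conn F v a ->
  e1 \in F -> e2 \in F -> incident e1 v -> incident e2 v ->
  ~~ conn (F :\ e1) v a -> ~~ conn (F :\ e2) v a -> e1 = e2.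
Proof.
move=> ac va e1F e2F ev1 ev2 nva1 nva2; apply/eqP/negPn/negP => e12.
have nvo1 := acyclic_incident ac e1F ev1.
have oa1 : conn (F :\ e1) (other_end e1 v) a.
  by case: (conn_setD1_incident ev1 va) => [h|[_ h]|[h _]]; rewrite ?h in nva1 nvo1.
case: (conn_setD1_incident ev2 oa1) => [h|[h _]|[_ h]].
- have e1F2 : e1 \in F :\ e2 by rewrite !inE e12.
  move/negP: nva2; apply; apply: connect_trans (conn_other_end e1F2 ev1) _.
  by apply: conn_subset h; apply/setSD/subsetDl.
- by move: nvo1; rewrite connC (conn_subset (subsetDl _ _) h).
- by move: nva1; rewrite (conn_subset (subsetDl _ _) h).
Qed.

Lemma card_separating_edges F v a : acyclic F -> conn F v a ->
  #|[set e in F | incident e v && ~~ conn (F :\ e) v a]| = (v != a).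
Proof.
move=> ac va; case: (eqVneq v a) => [<-|nva].
  by apply/eqP; rewrite cards_eq0; apply/eqP/setP => e; rewrite !inE connect0 !andbF.
have [e0 [e0F ev0 _ nva0]] := exists_separating_edge ac va nva.
rewrite /= -(cards1 e0); apply: eq_card => e; rewrite !inE.
apply/idP/eqP => [/and3P [eF ev nvae]|->]; last by rewrite e0F ev0.
exact: separating_edge_unique ac va eF e0F ev ev0 nvae nva0.
Qed.

Definition covers F a b := [forall w, conn F w a || conn F w b].
Definition splits F a b := covers F a b && ~~ conn F a b.

Lemma coversP F a b : reflect (forall w, conn F w a || conn F w b) (covers F a b).
Proof. exact: forallP. Qed.

Lemma covers_setD1 F e : spans F -> covers (F :\ e) (ep1 e) (ep2 e).
Proof.
move=> sp; apply/coversP => w; rewrite connC [conn _ w _]connC.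
by case: (conn_setD1 e (spans_conn (ep1 e) w sp)) => [->|[_ ->]|[_ ->]]; rewrite ?orbT.
Qed.

Lemma splits_setD1 F e :
  is_spanning_tree F -> e \in F -> splits (F :\ e) (ep1 e) (ep2 e).
Proof.
by rewrite spanning_treeE => /andP [sp /forall_inP ac] eF; rewrite /splits covers_setD1 ?ac.
Qed.

Lemma splits_connNE F p q : splits F p q -> forall w, conn F w q = ~~ conn F w p.
Proof.
move=> /andP [/coversP cov npq] w.
case wp: (conn F w p) => /=; last by have := cov w; rewrite wp.
by apply: contraNF npq => wq; rewrite connC in wp; apply: connect_trans wp wq.
Qed.

Lemma splits_connE F p q :
  splits F p q -> forall a b, conn F a b = (conn F a p == conn F b p).
Proof.
move=> spl a b; have wq := splits_connNE spl.
apply/idP/eqP => [ab|]; first by rewrite (same_connect (conn_sym F) ab).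
case ap: (conn F a p) => bp.
  by apply: connect_trans ap _; rewrite connC -bp.
by apply: connect_trans (_ : conn F a q) _; rewrite ?wq ?ap // connC wq -bp.
Qed.

Definition two_forest F a b := acyclic F && splits F a b.

Lemma two_forestxx F a : two_forest F a a = false.
Proof. by rewrite /two_forest /splits connect0 !andbF. Qed.

Lemma covers_minimalE F a b : a != b -> covers F a b ->
  [forall e in F, ~~ covers (F :\ e) a b] = acyclic F && ~~ conn F a b.
Proof.
move=> nab /coversP cov; apply/idP/idP => [/forall_inP min|/andP [ac nconn]].
  have ac : acyclic F.
    apply/forall_inP => e eF; apply: contra (min e eF) => pq; apply/coversP => w.
    by case/orP: (cov w) => /(conn_setD1_cycle pq) ->; rewrite ?orbT.
  rewrite ac; apply/negP => ab.
  have [e [eF ea ob _]] := exists_separating_edge ac ab nab.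
  move/negP: (min e eF); apply; apply/coversP => w.
  have wa : conn F w a.
    by case/orP: (cov w) => // wb; rewrite connC in ab; apply: connect_trans wb ab.
  case: (conn_setD1_incident ea wa) => [->|[-> _]|[wo _]] //.
  by rewrite (connect_trans wo ob) orbT.
apply/forall_inP => e eF; apply/negP => /coversP cov'.
have /forall_inP /(_ e eF) npq := ac.
case/orP: (cov' (ep1 e)) => pz; case/orP: (cov' (ep2 e)) => qz.
- by move: npq; rewrite (connect_trans pz) // connC.
- by move: nconn; rewrite (conn_through eF _ qz) // connC.
- by move: nconn; rewrite connC (conn_through eF _ qz) // connC.
- by move: npq; rewrite (connect_trans pz) // connC.
Qed.

End Connectivity.

Section Identification.
Variables (G : mgraph) (x y : vert G) (xy : x != y).
Implicit Types (F : {set edge G}) (a b v w : vert G).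

Local Notation conn' F := (connect (@adj (ident xy) F)).

Let x' : vert (ident xy) := exist _ x xy.
Let glue v : vert (ident xy) := insubd x' v.

Let val_glue v : val (glue v) = if v != y then v else x.
Proof. by rewrite val_insubd. Qed.

Let glue_x : glue x = x'.
Proof. by apply: val_inj; rewrite val_glue xy. Qed.

Let glue_y : glue y = x'.
Proof. by apply: val_inj; rewrite val_glue eqxx. Qed.

Let touches F a := conn F a x || conn F a y.
Let glued F a b := conn F a b || touches F a && touches F b.

Let glued_sym F a b : glued F a b -> glued F b a.
Proof. by rewrite /glued connC andbC. Qed.

Let glued_trans F a b c : glued F a b -> glued F b c -> glued F a c.
Proof.
have touchesC a' b' : conn F a' b' -> touches F b' -> touches F a'.
  by move=> ab /orP [] bz; rewrite /touches (connect_trans ab bz) ?orbT.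
rewrite /glued; case/orP => [ab|/andP [ta tb]]; case/orP => [bc|/andP [tb' tc]].
- by rewrite (connect_trans ab bc).
- by rewrite (touchesC _ _ ab tb') tc orbT.
- by rewrite ta (touchesC c b) ?orbT // connC.
- by rewrite ta tc orbT.
Qed.

Let glued_glue F v : glued F (val (glue v)) v.
Proof.
rewrite val_glue /glued; case: ifP => [_|/negbFE/eqP ->]; first by rewrite connect0.
by rewrite /touches !connect0 !orbT.
Qed.

Let conn_ident_glued F (u v : vert (ident xy)) : conn' F u v -> glued F (val u) (val v).
Proof.
move: v; apply: connect_ind => [w w' uw /existsP [e /andP [eF ww']]|]; last first.
  by rewrite /glued connect0.
have e_glued : glued F (@ep1 G e) (@ep2 G e) by rewrite /glued conn_edge.
apply: glued_trans uw _.
have glue_e := glued_glue F (@ep1 G e); have glue_e' := glued_glue F (@ep2 G e).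
case/orP: ww' => /andP [/eqP <- /eqP <-].
  exact: glued_trans glue_e (glued_trans e_glued (glued_sym glue_e')).
exact: glued_trans glue_e' (glued_trans (glued_sym e_glued) (glued_sym glue_e)).
Qed.

Let glued_conn_ident F a b : glued F a b -> conn' F (glue a) (glue b).
Proof.
have conn_glue a' b' : conn F a' b' -> conn' F (glue a') (glue b').
  move=> /connectP [p pth ->]; elim: p a' pth => //= c p IH a' /andP [/adjP [e eF ac] pth].
  apply: connect_trans (IH _ pth); apply/connect1/existsP; exists e; rewrite eF /=.
  by case/orP: ac => /andP [/eqP -> /eqP ->]; rewrite !eqxx ?orbT.
have touches_x' c : touches F c -> conn' F (glue c) x'.
  by case/orP => /conn_glue; rewrite ?glue_x ?glue_y.
case/orP => [/conn_glue //|/andP [/touches_x' ax /touches_x' bx]].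
by apply: connect_trans ax _; rewrite (@connC (ident xy) F).
Qed.

Lemma spans_identE F : @spans (ident xy) F = covers F x y.
Proof.
apply/idP/coversP => [sp w|cov].
  case: (eqVneq w y) => [->|wy]; first by rewrite connect0 orbT.
  have := conn_ident_glued (spans_conn (glue w) x' sp).
  by rewrite val_glue wy /glued /touches; case/orP => [->|/andP [-> _]].
apply/forallP => u; apply/forallP => v; rewrite -[u](valKd x') -[v](valKd x').
by apply: glued_conn_ident; rewrite /glued /touches cov (cov (val v)) orbT.
Qed.

Lemma spanning_tree_identE F : @is_spanning_tree (ident xy) F = two_forest F x y.
Proof.
rewrite /is_spanning_tree /two_forest /splits spans_identE.
rewrite (eq_forallb_in (P2 := fun e => ~~ covers (F :\ e) x y)) => [|e _]; last first.
  by rewrite spans_identE.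
by case cov: (covers F x y) => /=; [exact: covers_minimalE | rewrite andbF].
Qed.

End Identification.

Lemma tidE (G : mgraph) (a b : vert G) : tid a b = #|[set F | two_forest F a b]|.
Proof.
rewrite /tid /ntrees; move: (erefl (a != b)); case: {2 3}(a != b) => ab.
  by apply: eq_card => F; rewrite !inE spanning_tree_identE.
by move/negbFE/eqP: ab => <-; rewrite eq_card0 // => F; rewrite !inE two_forestxx.
Qed.

Section TwoForests.
Variable G : mgraph.
Implicit Types (F T : {set edge G}) (e f : edge G) (a b c d p w : vert G).

Lemma acyclicS F F' : F' \subset F -> acyclic F -> acyclic F'.
Proof.
move=> sF'F /forall_inP ac; apply/forall_inP => e eF'.
by apply: contra (ac e (subsetP sF'F e eF')); apply/conn_subset/setSD.
Qed.

Lemma two_forestC F a b : two_forest F a b = two_forest F b a.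
Proof.
rewrite /two_forest /splits connC; congr [&& _, _ & _].
by apply: eq_forallb => w; rewrite orbC.
Qed.

Lemma two_forestE F a b :
  two_forest F a b -> forall c d, two_forest F c d = ~~ conn F c d.
Proof.
case/andP => ac spl c d; rewrite /two_forest /splits ac /=.
case: (boolP (conn F c d)) => cd; rewrite ?andbF ?andbT //; apply/coversP => w.
move: cd; rewrite (splits_connE spl c d) (splits_connE spl w c) (splits_connE spl w d).
by case: (conn F c a); case: (conn F d a); case: (conn F w a).
Qed.

Lemma two_forest_swap F p a b :
  two_forest F p a -> ~~ two_forest F a b -> two_forest F p b.
Proof.
move=> pa; rewrite !(two_forestE pa) negbK => ab.
have := pa; rewrite (two_forestE pa); apply: contraNN => pb.
by rewrite connC in ab; apply: connect_trans pb ab.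
Qed.

Lemma two_forest_endsE F e a b : conn F a (ep1 e) != conn F a (ep2 e) ->
  two_forest F a b = two_forest F (ep1 e) (ep2 e) && ~~ conn F a b.
Proof.
move=> apq; case: (boolP (two_forest F (ep1 e) (ep2 e))) => [/two_forestE -> //|].
apply: contraNF => /two_forestE ->; apply: contra apq => pq.
by rewrite (same_connect_r (conn_sym F) pq).
Qed.

Lemma spanning_tree_setU1E F e : e \notin F ->
  is_spanning_tree (e |: F) = two_forest F (ep1 e) (ep2 e).
Proof.
move=> eF; have eFe : e \in e |: F := setU11 e F.
have sFFe : F \subset e |: F := subsetU1 e F.
apply/idP/idP => [tr|/andP [ac /andP [cov npq]]].
  rewrite /two_forest -{2}(setU1K eF) splits_setD1 // andbT.
  by move: tr; rewrite spanning_treeE => /andP [_]; apply: acyclicS.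
rewrite spanning_treeE; apply/andP; split.
  apply/forallP => a; apply/forallP => b.
  have ce w : conn (e |: F) w (ep1 e).
    case/orP: (coversP _ _ _ cov w) => /(conn_subset sFFe) // wq.
    by apply: connect_trans wq _; rewrite connC; apply: conn_edge.
  by apply: connect_trans (ce a) _; rewrite connC.
apply/forall_inP => f; case: (eqVneq f e) => [-> _|fe]; first by rewrite setU1K.
rewrite in_setU1 (negbTE fe) /= => fF; apply/negP.
have DfDe : (e |: F) :\ f :\ e = F :\ f.
  apply/setP => g; rewrite !inE.
  by case: (eqVneq g e) => [->|//]; rewrite (negbTE eF) andbF.
move=> /(conn_setD1 e); rewrite DfDe.
have sub := subsetDl F [set f]; have /forall_inP /(_ f fF) nf := ac.
have ef := conn_edge fF.
case=> [h|[h1 h2]|[h1 h2]]; first by rewrite h in nf.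
  apply: (negP npq); rewrite connC in h1; rewrite connC in h2.
  exact: connect_trans (conn_subset sub h1) (connect_trans ef (conn_subset sub h2)).
apply: (negP npq); rewrite connC in ef.
exact: connect_trans (conn_subset sub h2) (connect_trans ef (conn_subset sub h1)).
Qed.

Lemma ntrees_gt0 : connectedG G -> 0 < ntrees G.
Proof.
move=> con; have [T spT minT] := arg_minnP (fun T : {set edge G} => #|T|) con.
rewrite card_gt0; apply/set0Pn; exists T; rewrite inE /is_spanning_tree spT.
apply/forall_inP => e eT; apply/negP => /minT.
by rewrite [leqLHS](cardsD1 e) eT add1n ltnn.
Qed.

Lemma bridge_splits e : connectedG G -> is_bridge e ->
  splits ([set: edge G] :\ e) (ep1 e) (ep2 e).
Proof.
move=> con; rewrite /is_bridge /splits covers_setD1 //=; apply: contra => pq.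
by apply/forallP => a; apply/forallP => b; apply/conn_setD1_cycle/spans_conn.
Qed.

Lemma bridge_in_spanning_tree e T : is_bridge e -> is_spanning_tree T -> e \in T.
Proof.
rewrite /is_bridge spanning_treeE => + /andP [sp _]; apply: contraR => eT.
apply/forallP => a; apply/forallP => b; apply: conn_subset (spans_conn a b sp).
by apply/subsetP => f fT; rewrite !inE andbT; apply: contraNneq eT => <-.
Qed.

Lemma conn_bridge_setD1 e T : connectedG G -> is_bridge e -> is_spanning_tree T ->
  conn (T :\ e) =2 conn ([set: edge G] :\ e).
Proof.
move=> con br tr a b; have splT := splits_setD1 tr (bridge_in_spanning_tree br tr).
have /andP [_ npq] := bridge_splits con br.
have sub : T :\ e \subset [set: edge G] :\ e by apply/setSD/subsetT.
apply/idP/idP => [/(conn_subset sub) //|ab]; rewrite (splits_connE splT).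
have q_side w : conn (T :\ e) w (ep1 e) = false -> conn (T :\ e) w (ep2 e).
  by move=> wp; rewrite (splits_connNE splT) wp.
case ap: (conn (T :\ e) a (ep1 e)); case bp: (conn (T :\ e) b (ep1 e)) => //.
  case/negP: npq; rewrite connC in ap; apply: connect_trans (conn_subset sub ap) _.
  exact: connect_trans ab (conn_subset sub (q_side _ bp)).
case/negP: npq; rewrite connC in bp; rewrite connC in ab.
apply: connect_trans (conn_subset sub bp) _.
exact: connect_trans ab (conn_subset sub (q_side _ ap)).
Qed.

End TwoForests.

Lemma tidxx (G : mgraph) (a : vert G) : tid a a = 0%N.
Proof. by rewrite tidE eq_card0 // => F; rewrite !inE two_forestxx. Qed.

Lemma tidC (G : mgraph) (a b : vert G) : tid a b = tid b a.
Proof. by rewrite !tidE; apply: eq_card => F; rewrite !inE two_forestC. Qed.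

Local Open Scope ring_scope.

Lemma sum_natr_cond (R : pzSemiRingType) (T : finType) (A P : pred T) :
  \sum_(x | A x) ((P x)%:R : R) = #|[set x | A x && P x]|%:R.
Proof.
rewrite -sumr_const big_mkcond [RHS]big_mkcond; apply: eq_bigr => x _.
by rewrite inE; case: (A x); case: (P x).
Qed.

Definition dipole (R : pzRingType) (T : eqType) (a b v : T) : R :=
  (a == v)%:R - (b == v)%:R.

Lemma sum_mul_dipole (R : pzRingType) (T : finType) (f : T -> R) a b :
  \sum_v f v * dipole R a b v = f a - f b.
Proof.
have sum_delta c : \sum_v f v * (c == v)%:R = f c.
  rewrite (bigD1 c) //= eqxx mulr1 big1 ?addr0 // => v.
  by rewrite eq_sym => /negbTE ->; rewrite mulr0.
by rewrite -sum_delta -[f b]sum_delta -sumrB; apply: eq_bigr => v _; rewrite mulrBr.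
Qed.

Section Currents.
Variables (G : mgraph) (R : comPzRingType) (s t : vert G).
Implicit Types (F T : {set edge G}) (e : edge G) (a b p v w : vert G).

Definition side F w : R := (conn F s w)%:R.
Definition potential v : R := (tid v s)%:R - (tid v t)%:R.
Definition current e : R :=
  \sum_F (two_forest F s t)%:R * (side F (ep1 e) - side F (ep2 e)).
Definition tree_flow T e : R :=
  ((e \in T) && ~~ conn (T :\ e) s t)%:R
  * (side (T :\ e) (ep1 e) - side (T :\ e) (ep2 e)).

Lemma natr_tidE a b : (tid a b)%:R = \sum_F (two_forest F a b)%:R :> R.
Proof.
by rewrite tidE (sum_natr_cond _ predT); congr (_%:R); apply: eq_card => F; rewrite !inE.
Qed.

Lemma natr_ntreesE :
  (ntrees G)%:R = \sum_(T : {set edge G}) (is_spanning_tree T)%:R :> R.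
Proof.
by rewrite (sum_natr_cond _ predT); congr (_%:R); apply: eq_card => F; rewrite !inE.
Qed.

Lemma two_forest_diffE F p :
  (two_forest F p s)%:R - (two_forest F p t)%:R
  = (two_forest F s t)%:R * (1 - 2 * side F p) :> R.
Proof.
case st: (two_forest F s t).
  have /andP [_ spl] := st.
  rewrite !(two_forestE st) /side (splits_connNE spl p) (connC F s p).
  by case: (conn F p s) => /=; ring.
rewrite (_ : two_forest F p s = two_forest F p t) ?subrr ?mul0r //.
by apply/idP/idP => /two_forest_swap; apply; rewrite ?st // two_forestC st.
Qed.

Lemma potential_diff_current e : potential (ep1 e) - potential (ep2 e) = -2 * current e.
Proof.
rewrite /potential /current !natr_tidE -!sumrB mulr_sumr.
by apply: eq_bigr => F _; rewrite !two_forest_diffE; ring.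
Qed.

Lemma current_spanning_trees e :
  current e = \sum_T (is_spanning_tree T)%:R * tree_flow T e.
Proof.
rewrite /current (bigID (fun F => e \in F)) /= big1 ?add0r => [|F eF]; last first.
  by rewrite /side (same_connect_r (conn_sym F) (conn_edge eF)) subrr mulr0.
rewrite [RHS](bigID (fun T => e \in T)) /= [X in _ + X]big1 ?addr0 => [|T eT]; last first.
  by rewrite /tree_flow (negbTE eT) mul0r mulr0.
rewrite [RHS](reindex_onto (fun F => e |: F) (fun T => T :\ e)) /= => [|T eT]; last first.
  exact: setD1K.
apply: eq_big => [F|F eF].
  rewrite setU11 /=; apply/idP/eqP => [eF|<-]; first by rewrite setU1K.
  by rewrite setD11.
rewrite /tree_flow setU1K // setU11 /=.
case: (eqVneq (conn F s (ep1 e)) (conn F s (ep2 e))) => [same|diff].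
  by rewrite /side same subrr !mulr0.
rewrite (two_forest_endsE _ diff) -spanning_tree_setU1E //.
by case: (is_spanning_tree _); case: (conn F s t) => /=; ring.
Qed.

Lemma tree_flow_dipole T e v : is_spanning_tree T -> e \in T ->
  tree_flow T e * dipole R (ep1 e) (ep2 e) v
  = (incident e v && ~~ conn (T :\ e) v t)%:R
    - (incident e v && ~~ conn (T :\ e) v s)%:R.
Proof.
move=> tr eT; have spl := splits_setD1 tr eT; set F := T :\ e in spl *.
have /andP [_ npq] := spl; have sideE := splits_connE spl.
have pq : ep1 e != ep2 e by apply: contraNneq npq => ->.
have qp : conn F (ep2 e) (ep1 e) = false by rewrite connC (negbTE npq).
rewrite /tree_flow /dipole /side /incident eT (sideE s t) (sideE s (ep1 e)).
rewrite (sideE s (ep2 e)) (sideE v t) (sideE v s) qp connect0.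
case: (eqVneq (ep1 e) v) => [<-|_].
  rewrite connect0 [ep2 e == _]eq_sym (negbTE pq).
  by case: (conn F s (ep1 e)); case: (conn F t (ep1 e)) => /=; ring.
case: (eqVneq (ep2 e) v) => [<-|_]; last by rewrite /=; ring.
by rewrite qp; case: (conn F s (ep1 e)); case: (conn F t (ep1 e)) => /=; ring.
Qed.

Lemma tree_flow_conservation T v : is_spanning_tree T ->
  \sum_e tree_flow T e * dipole R (ep1 e) (ep2 e) v = dipole R s t v.
Proof.
move=> tr; rewrite (bigID (mem T)) /= [X in _ + X]big1 ?addr0 => [|e eT]; last first.
  by rewrite /tree_flow (negbTE eT) !mul0r.
rewrite (eq_bigr _ (fun e eT => tree_flow_dipole v tr eT)) sumrB !sum_natr_cond.
have /andP [sp ac] : spans T && acyclic T by rewrite -spanning_treeE.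
rewrite !card_separating_edges ?spans_conn // /dipole (eq_sym s) (eq_sym t).
by case: (v == s); case: (v == t) => /=; ring.
Qed.

Lemma current_conservation v :
  \sum_e current e * dipole R (ep1 e) (ep2 e) v = (ntrees G)%:R * dipole R s t v.
Proof.
under eq_bigr do rewrite current_spanning_trees mulr_suml.
rewrite exchange_big natr_ntreesE mulr_suml; apply: eq_bigr => T _ /=.
under eq_bigr do rewrite -mulrA; rewrite -mulr_sumr.
case: (boolP (is_spanning_tree T)) => [tr|_]; last by rewrite !mul0r.
by rewrite tree_flow_conservation.
Qed.

Lemma sum_potential_diff_sqr :
  \sum_e (potential (ep1 e) - potential (ep2 e)) ^+ 2 = 4 * (ntrees G)%:R * (tid s t)%:R.
Proof.
transitivity (\sum_e \sum_v (potential (ep1 e) - potential (ep2 e))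
                       * (potential v * dipole R (ep1 e) (ep2 e) v)).
  by apply: eq_bigr => e _; rewrite -mulr_sumr sum_mul_dipole expr2.
rewrite exchange_big /=.
transitivity (-2 * (ntrees G)%:R * \sum_v potential v * dipole R s t v).
  rewrite mulr_sumr; apply: eq_bigr => v _.
  rewrite (eq_bigr (fun e => potential v * -2 * (current e * dipole R (ep1 e) (ep2 e) v))).
    by rewrite -mulr_sumr current_conservation; ring.
  by move=> e _; rewrite potential_diff_current; ring.
by rewrite sum_mul_dipole /potential !tidxx (tidC t s); ring.
Qed.

Lemma bridge_potential_diff_sqr e : connectedG G -> is_bridge e ->
  (potential (ep1 e) - potential (ep2 e)) ^+ 2
  = 4 * (ntrees G)%:R ^+ 2 * (separates e s t)%:R.
Proof.
move=> con br; set D := [set: edge G] :\ e.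
have current_bridge : current e = (ntrees G)%:R * (separates e s t)%:R
                                  * ((conn D s (ep1 e))%:R - (conn D s (ep2 e))%:R).
  rewrite current_spanning_trees natr_ntreesE !mulr_suml; apply: eq_bigr => T _.
  case: (boolP (is_spanning_tree T)) => [tr|_]; last by rewrite !mul0r.
  rewrite /tree_flow /side /separates (bridge_in_spanning_tree br tr).
  by rewrite !(conn_bridge_setD1 con br tr) /= mulrA.
rewrite potential_diff_current current_bridge (splits_connNE (bridge_splits con br) s).
by case: (separates e s t); case: (conn D s (ep1 e)) => /=; ring.
Qed.

End Currents.

Unset Implicit Arguments.

Theorem theorem4p14 (G : mgraph) (s t : vert G) :
  connectedG G ->
  let T : rat := (ntrees G)%:R in
  let D (e : edge G) : rat :=
    (tid (ep1 e) s)%:R - (tid (ep1 e) t)%:R - (tid (ep2 e) s)%:R + (tid (ep2 e) t)%:R in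
  let k : nat := #|[set e : edge G | is_bridge e & separates e s t]| in
  (tid s t)%:R = k%:R * T + (4 * T)^-1 * \sum_(e : edge G | ~~ is_bridge e) D e ^+ 2
  /\ (tid s t)%:R = (4 * T)^-1 * \sum_(e : edge G) D e ^+ 2.
Proof.
move=> con T D k.
have DE e : D e = potential rat s t (ep1 e) - potential rat s t (ep2 e).
  by rewrite /D /potential; ring.
have T0 : T != 0 by rewrite pnatr_eq0 -lt0n ntrees_gt0.
have energy : \sum_e D e ^+ 2 = 4 * T * (tid s t)%:R.
  by under eq_bigr do rewrite DE; apply: sum_potential_diff_sqr.
have bridges : \sum_(e | is_bridge e) D e ^+ 2 = 4 * T ^+ 2 * k%:R.
  rewrite /k -sum_natr_cond mulr_sumr; apply: eq_bigr => e br.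
  by rewrite DE bridge_potential_diff_sqr.
split; last by rewrite energy; field.
have non_bridges :
    \sum_(e | ~~ is_bridge e) D e ^+ 2 = 4 * T * (tid s t)%:R - 4 * T ^+ 2 * k%:R.
  by rewrite -energy [in RHS](bigID (@is_bridge G)) /= bridges; ring.
by rewrite non_bridges; field.
Qed.
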